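(* Let $D$ be a strongly connected oriented graph such that for every vertex $x$, $x^+$ induces a transitive tournament. Then the inclusion-wise maximal hubs of $D$ form a partition of $V(D)$. Moreover, for any two distinct maximal hubs $H_1,H_2$, exactly one of the following holds: (i) there is no arc between $H_1$ and $H_2$; (ii) there is a nonempty set $S\subseteq H_2$ inducing a transitive tournament such that the arcs between $H_1$ and $H_2$ are exactly all arcs $hs$ with $h\in H_1$, $s\in S$; (iii) the same as (ii) with the roles of $H_1$ and $H_2$ exchanged.
   Context: Digraphs are finite, no loops, no parallel arcs; an oriented graph has no digon. $x^+$, $x^-$ denote out- and in-neighbourhoods. A hub of $D$ is a set $H\subseteq V(D)$ such that $D[H]$ is strongly connected and there exists a vertex $x\notin H$ with $H\subseteq x^-$. (Every single vertex forms a hub, since $D$ is strong.) *)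

(* A digraph on a finite vertex type T is given by its arc
   relation a : rel T (a x y means there is an arc x -> y). *)
From mathcomp Require Import all_boot.
Set Implicit Arguments. Unset Strict Implicit. Unset Printing Implicit Defensive.

Section Digraphs.
Variable T : finType.
Variable a : rel T.

Definition oriented : Prop :=
  (forall x, ~~ a x x) /\ (forall x y, a x y -> ~~ a y x).

Definition strong : Prop := forall x y : T, connect a x y.

Definition outnb (x : T) : {set T} := [set y | a x y].
Definition innb (x : T) : {set T} := [set y | a y x].

Definition induced (H : {set T}) : rel T :=
  [rel u v | [&& u \in H, v \in H & a u v]].

Definition strong_in (H : {set T}) : Prop :=
  H != set0 /\ forall x y, x \in H -> y \in H -> connect (induced H) x y.

Definition transitive_tournament (S : {set T}) : Prop :=
  (forall u v, u \in S -> v \in S -> u != v -> a u v || a v u) /\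
  (forall u v w, u \in S -> v \in S -> w \in S -> a u v -> a v w -> a u w).

Definition hub (H : {set T}) : Prop :=
  strong_in H /\ exists x, x \notin H /\ H \subset innb x.

Definition maximal_hub (H : {set T}) : Prop :=
  hub H /\ forall H', hub H' -> H \subset H' -> H' = H.

Definition some_arc_between (H1 H2 : {set T}) : Prop :=
  exists u v, [/\ u \in H1, v \in H2 & a u v || a v u].

Definition arcs_into (H1 H2 : {set T}) : Prop :=
  exists S : {set T},
    [/\ S \subset H2, S != set0, transitive_tournament S &
        forall u v, (u \in H1 /\ v \in H2) \/ (u \in H2 /\ v \in H1) ->
          (a u v <-> (u \in H1 /\ v \in S))].
End Digraphs.

Definition exactly_one3 (P Q R : Prop) : Prop :=
  (P /\ ~ Q /\ ~ R) \/ (~ P /\ Q /\ ~ R) \/ (~ P /\ ~ Q /\ R).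

From mathcomp Require Import all_boot.
From Stdlib Require Import Classical.
Set Implicit Arguments. Unset Strict Implicit. Unset Printing Implicit Defensive.

(* Every vertex v with an out-neighbour has a sink t in D[v^+]: every other
   out-neighbour of v points to t.  The key fact is that sinks witness hubs:
   if H is a hub and v is in H, then the sink t of v lies outside H and
   H is contained in t^-.  Consequently all vertices of a hub share the same
   sink, and an arc u -> w moves sinks forward (sink(u) = sink(w) or
   sink(u) -> sink(w)).  Two hubs with a common sink whose union is strong
   merge into a bigger hub, so two distinct maximal hubs are disjoint, and
   they cannot have arcs in both directions (both sinks would coincide).
   Since every vertex is a hub and hubs extend to maximal ones, the maximal
   hubs partition V(D).  Finally, if all arcs go from H1 to H2, the heads of
   those arcs form a nonempty subset S of some out-neighbourhood (hence a
   transitive tournament), and every vertex of H1 sends an arc to all of S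
   because this property propagates along the arcs of the strong D[H1]. *)

Section DigraphBasics.
Variable T : finType.

Lemma connect_stable (e : rel T) (P : pred T) x y :
  (forall u w, e u w -> P u -> P w) -> connect e x y -> P x -> P y.
Proof.
move=> stP /connectP [p ep ->]; elim: p x ep => //= z p IH x /andP [exz ep] Px.
exact: IH ep (stP _ _ exz Px).
Qed.

Variable a : rel T.

Lemma connect_induced_sub (A B : {set T}) x y : A \subset B ->
  connect (induced a A) x y -> connect (induced a B) x y.
Proof.
move=> /subsetP AB; apply: connect_sub => u w /and3P [uA wA uw].
by apply: connect1; apply/and3P; split; rewrite ?AB.
Qed.

Lemma strong_inU (H1 H2 : {set T}) u1 u2 w1 w2 :
  strong_in a H1 -> strong_in a H2 ->
  u1 \in H1 -> u2 \in H2 -> w1 \in H1 -> w2 \in H2 ->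
  connect (induced a (H1 :|: H2)) u1 u2 ->
  connect (induced a (H1 :|: H2)) w2 w1 ->
  strong_in a (H1 :|: H2).
Proof.
move=> [n1 s1] [_ s2] u1H u2H w1H w2H c12 c21; split.
  by have /set0Pn [x xH1] := n1; apply/set0Pn; exists x; rewrite inE xH1.
have sub1 := subsetUl H1 H2; have sub2 := subsetUr H1 H2.
move=> x y; rewrite !inE => /orP [xH|xH] /orP [yH|yH].
- exact: connect_induced_sub sub1 (s1 _ _ xH yH).
- apply: connect_trans (connect_induced_sub sub1 (s1 _ _ xH u1H)) _.
  exact: connect_trans c12 (connect_induced_sub sub2 (s2 _ _ u2H yH)).
- apply: connect_trans (connect_induced_sub sub2 (s2 _ _ xH w2H)) _.
  exact: connect_trans c21 (connect_induced_sub sub1 (s1 _ _ w1H yH)).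
- exact: connect_induced_sub sub2 (s2 _ _ xH yH).
Qed.

Lemma transitive_tournament_sub (A B : {set T}) :
  A \subset B -> transitive_tournament a B -> transitive_tournament a A.
Proof.
move=> /subsetP AB [cmp tr]; split=> [u v|u v w] uA vA.
  exact: cmp (AB _ uA) (AB _ vA).
by move=> wA; apply: tr; apply: AB.
Qed.

Definition arc_from (A B : {set T}) : Prop :=
  exists u v, [/\ u \in A, v \in B & a u v].

Lemma some_arc_betweenE (A B : {set T}) :
  some_arc_between a A B <-> arc_from A B \/ arc_from B A.
Proof.
split=> [[u [v [uA vB /orP [uv|vu]]]]|[[u [v [uA vB uv]]]|[v [u [vB uA vu]]]]].
- by left; exists u, v.
- by right; exists v, u.
- by exists u, v; rewrite uv.
- by exists u, v; rewrite vu orbT.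
Qed.

Lemma maximal_hubU (H1 H2 : {set T}) : maximal_hub a H1 -> maximal_hub a H2 ->
  hub a (H1 :|: H2) -> H1 = H2.
Proof.
move=> [_ m1] [_ m2] hU.
exact: etrans (esym (m1 _ hU (subsetUl H1 H2))) (m2 _ hU (subsetUr H1 H2)).
Qed.

End DigraphBasics.

Lemma exactly_one3_of (P Q A B C : Prop) : ~ (P /\ Q) ->
  (A <-> ~ (P \/ Q)) -> (B <-> P /\ ~ Q) -> (C <-> Q /\ ~ P) -> exactly_one3 A B C.
Proof. by rewrite /exactly_one3; case: (classic P); case: (classic Q); tauto. Qed.

Section Sinks.
Variable T : finType.
Variable a : rel T.
Hypothesis a_oriented : oriented a.
Hypothesis outnb_tt : forall x : T, transitive_tournament a (outnb a x).

Lemma arc_irrefl x : ~~ a x x. Proof. by case: a_oriented. Qed.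
Lemma arc_asym x y : a x y -> ~~ a y x. Proof. by case: a_oriented => _; apply. Qed.

Lemma reach1_antisym x y : x = y \/ a x y -> y = x \/ a y x -> x = y.
Proof. by case=> // xy [->|yx] //; move: (arc_asym xy); rewrite yx. Qed.

Lemma outnb_cmp x u v : a x u -> a x v -> u != v -> a u v || a v u.
Proof. by move=> xu xv; case: (outnb_tt x) => cmp _; apply: cmp; rewrite inE. Qed.

Lemma outnb_trans x u v w : a x u -> a x v -> a x w -> a u v -> a v w -> a u w.
Proof. by move=> xu xv xw; case: (outnb_tt x) => _ tr; apply: tr; rewrite inE. Qed.

Definition sink_of (v t : T) : Prop :=
  a v t /\ forall y, a v y -> y = t \/ a y t.

(* A vertex with an out-neighbour has a sink: take an out-neighbour with the
   most in-neighbours inside v^+. *)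
Lemma sink_exists v y0 : a v y0 -> exists t, sink_of v t.
Proof.
move=> vy0; case: (arg_maxnP (fun y => #|[set z | a v z && a z y]|) vy0).
move=> t vt tmax; exists t; split=> // y vy.
case: (eqVneq y t) => [->|yt]; first by left.
case/orP: (outnb_cmp vy vt yt) => [yt'|ty]; first by right.
have : #|[set z | a v z && a z y]| <= #|[set z | a v z && a z t]| := tmax y vy.
rewrite leqNgt => /negP []; apply: proper_card; apply/properP; split.
  apply/subsetP => z; rewrite !inE => /andP [vz zt].
  by rewrite vz (outnb_trans vz vt vy zt ty).
by exists t; rewrite !inE ?vt ?ty //= arc_irrefl.
Qed.

Lemma sink_step u w tu tw : a u w -> sink_of u tu -> sink_of w tw ->
  tu = tw \/ a tu tw.
Proof.
move=> uw [_ su] [wtw sw]; case: (su w uw) => [<-|wtu]; first by right.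
exact: sw.
Qed.

Lemma hub_sink (H : {set T}) v t : hub a H -> v \in H -> sink_of v t ->
  H \subset innb a t /\ t \notin H.
Proof.
move=> [[_ sH] [x [xH /subsetP Hx]]] vH [vt sv].
have inx h : h \in H -> a h x by move/Hx; rewrite inE.
have xt : x = t \/ a x t := sv x (inx v vH).
have tH : t \notin H.
  apply/negP => tH; case: xt => [xt|xt]; first by rewrite xt tH in xH.
  by move: (arc_asym xt); rewrite inx.
split=> //; apply/subsetP => y yH; rewrite inE.
apply: (connect_stable (P := fun h => a h t)) (sH v y vH yH) vt.
move=> h w /and3P [hH wH hw] ht; have wt : w != t by apply: contraNneq tH => <-.
case/orP: (outnb_cmp hw ht wt) => // tw.
case: xt => [xt|xt]; first by move: (arc_asym tw); rewrite -xt inx.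
by move: (arc_asym xt); rewrite (outnb_trans ht hw (inx h hH) tw (inx w wH)).
Qed.

Lemma hub_sink_exists (H : {set T}) v : hub a H -> v \in H -> exists t, sink_of v t.
Proof.
by move=> [_ [x [_ /subsetP Hx]]] /Hx; rewrite inE; apply: sink_exists.
Qed.

Lemma hub_sink_const (H : {set T}) u w tu tw : hub a H -> u \in H -> w \in H ->
  sink_of u tu -> sink_of w tw -> tu = tw.
Proof.
move=> hH uH wH su sw.
have [/subsetP Htu _] := hub_sink hH uH su; have [/subsetP Htw _] := hub_sink hH wH sw.
have wtu : a w tu by move: (Htu w wH); rewrite inE.
have utw : a u tw by move: (Htw u uH); rewrite inE.
by apply: reach1_antisym; [apply: sw.2 | apply: su.2].
Qed.

Lemma hubU (H1 H2 : {set T}) v1 v2 t : hub a H1 -> hub a H2 -> v1 \in H1 -> v2 \in H2 ->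
  sink_of v1 t -> sink_of v2 t -> strong_in a (H1 :|: H2) -> hub a (H1 :|: H2).
Proof.
move=> h1 h2 v1H v2H s1 s2 sU.
have [t1 tH1] := hub_sink h1 v1H s1; have [t2 tH2] := hub_sink h2 v2H s2.
split=> //; exists t.
by rewrite inE negb_or tH1 tH2 subUset t1 t2.
Qed.

Lemma maximal_hubs_meet (H1 H2 : {set T}) v : maximal_hub a H1 -> maximal_hub a H2 ->
  v \in H1 -> v \in H2 -> H1 = H2.
Proof.
move=> m1 m2 v1 v2; apply: (maximal_hubU m1 m2).
have [t st] := hub_sink_exists m1.1 v1.
apply: (hubU m1.1 m2.1 v1 v2 st st).
by apply: (strong_inU m1.1.1 m2.1.1 v1 v2 v1 v2); apply: connect0.
Qed.

Lemma maximal_hubs_disjoint (H1 H2 : {set T}) : maximal_hub a H1 -> maximal_hub a H2 ->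
  H1 != H2 -> [disjoint H1 & H2].
Proof.
move=> m1 m2 neq; rewrite -setI_eq0; apply: contraNT neq => /set0Pn [v].
by rewrite inE => /andP [v1 v2]; rewrite (maximal_hubs_meet m1 m2 v1 v2).
Qed.

(* Maximal hubs joined by arcs in both directions coincide: the arcs force
   their (common) sinks to precede each other. *)
Lemma maximal_hubs_two_way (H1 H2 : {set T}) : maximal_hub a H1 -> maximal_hub a H2 ->
  arc_from a H1 H2 -> arc_from a H2 H1 -> H1 = H2.
Proof.
move=> m1 m2 [u1 [u2 [u1H u2H a12]]] [w2 [w1 [w2H w1H a21]]].
have [[t1 su1] [t2 su2]] := (hub_sink_exists m1.1 u1H, hub_sink_exists m2.1 u2H).
have [[s1 sw1] [s2 sw2]] := (hub_sink_exists m1.1 w1H, hub_sink_exists m2.1 w2H).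
have e1 : s1 = t1 := hub_sink_const m1.1 w1H u1H sw1 su1.
have e2 : s2 = t2 := hub_sink_const m2.1 w2H u2H sw2 su2.
subst t1 t2.
have s12 : s1 = s2 := reach1_antisym (sink_step a12 su1 su2) (sink_step a21 sw2 sw1).
apply: (maximal_hubU m1 m2); rewrite s12 in su1.
apply: (hubU m1.1 m2.1 u1H u2H su1 su2).
apply: (strong_inU m1.1.1 m2.1.1 u1H u2H w1H w2H); apply: connect1;
  by rewrite /induced /= !inE ?u1H ?u2H ?w1H ?w2H ?orbT.
Qed.

Lemma arc_into_spreads (H : {set T}) s h h' : strong_in a H -> s \notin H ->
  (forall w, w \in H -> ~~ a s w) -> h \in H -> h' \in H -> a h s -> a h' s.
Proof.
move=> [_ sH] sNH noback hH h'H.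
apply: (connect_stable (P := fun z => a z s)) (sH _ _ hH h'H).
move=> z w /and3P [_ wH zw] zs; have ws : w != s by apply: contraNneq sNH => <-.
by case/orP: (outnb_cmp zw zs ws) => // sw; move: (noback w wH); rewrite sw.
Qed.

(* Between a hub H1 and a disjoint set H2, case (ii) holds exactly when all
   arcs go from H1 to H2; S is then H2 intersected with some out-neighbourhood. *)
Lemma arcs_intoP (H1 H2 : {set T}) : hub a H1 -> [disjoint H1 & H2] ->
  arcs_into a H1 H2 <-> arc_from a H1 H2 /\ ~ arc_from a H2 H1.
Proof.
move=> hH1 dis; have disF v : v \in H1 -> v \in H2 -> False.
  by move=> v1 v2; move: dis; rewrite -setI_eq0 => /set0Pn []; exists v; rewrite inE v1.
split.
  move=> [S [/subsetP SH2 /set0Pn [s sS] _ arcsE]]; split.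
    have [/set0Pn [h hH] _] := hH1.1.
    by exists h, s; split; rewrite ?SH2 //; apply/(arcsE h s); [left; rewrite SH2|].
  move=> [w2 [w1 [w2H w1H /(arcsE w2 w1 (or_intror (conj w2H w1H)))[w2H1 _]]]].
  exact: disF w2H1 w2H.
move=> [[u1 [u2 [u1H u2H a12]]] noback].
have nb w2 w1 : w2 \in H2 -> w1 \in H1 -> ~~ a w2 w1.
  by move=> w2H w1H; apply/negP => a21; apply: noback; exists w2, w1.
exists (H2 :&: outnb a u1); split.
- exact: subsetIl.
- by apply/set0Pn; exists u2; rewrite !inE u2H a12.
- exact: transitive_tournament_sub (subsetIr _ _) (outnb_tt u1).
move=> u v [[uH vH]|[uH vH]]; rewrite !inE; split.
- move=> uv; split=> //; rewrite vH; apply: (arc_into_spreads hH1.1 _ _ uH u1H uv).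
    by apply/negP => /disF; apply.
  by move=> w wH; apply: nb.
- by move=> [_ /andP [_ u1v]]; apply: (arc_into_spreads hH1.1 _ _ u1H uH u1v);
    [apply/negP => /disF; apply | move=> w wH; apply: nb].
- by move=> uv; move: (nb u v uH vH); rewrite uv.
- by move=> [/disF].
Qed.

Lemma maximal_hubs_arcs (H1 H2 : {set T}) :
  maximal_hub a H1 -> maximal_hub a H2 -> H1 != H2 ->
  exactly_one3 (~ some_arc_between a H1 H2) (arcs_into a H1 H2) (arcs_into a H2 H1).
Proof.
move=> m1 m2 neq; have dis := maximal_hubs_disjoint m1 m2 neq.
apply: (exactly_one3_of (P := arc_from a H1 H2) (Q := arc_from a H2 H1)).
- by move=> [e12 e21]; move/eqP: neq; apply; apply: maximal_hubs_two_way.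
- by rewrite some_arc_betweenE.
- exact: arcs_intoP m1.1 dis.
- by apply: arcs_intoP m2.1 _; rewrite disjoint_sym.
Qed.

Section Partition.
Hypothesis T_nontrivial : 1 < #|T|.
Hypothesis a_strong : strong a.

(* In a strong digraph with two vertices every vertex has an out-neighbour,
   so every single vertex forms a hub. *)
Lemma vertex_hub v : hub a [set v].
Proof.
have [y vy] : exists y, y != v.
  have [x [z [_ _ xz]]] := card_gt1P T_nontrivial.
  by case: (eqVneq x v) => [xv|]; [exists z; rewrite -xv eq_sym | exists x].
have [z vz] : exists z, a v z.
  move: (a_strong v y) => /connectP [[|z p] /= ep yE]; first by rewrite yE eqxx in vy.
  by exists z; case/andP: ep.
split.
  split; first by apply/set0Pn; exists v; rewrite inE.
  by move=> x w /set1P -> /set1P ->; apply: connect0.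
exists z; split; last by rewrite sub1set inE.
by rewrite inE; apply: contraNneq (arc_irrefl v) => zv; rewrite -{2}zv.
Qed.

Lemma not_maximal_hub (H : {set T}) : hub a H -> ~ maximal_hub a H ->
  exists H', hub a H' /\ H \proper H'.
Proof.
move=> hH nmH; apply: NNPP => noH'; apply: nmH; split=> // H' hH' HH'.
apply: NNPP => neq; apply: noH'; exists H'; split=> //.
by rewrite properEneq HH' andbT; apply/eqP => E; apply: neq.
Qed.

Lemma maximal_hub_exists (H : {set T}) :
  hub a H -> exists M, maximal_hub a M /\ H \subset M.
Proof.
have [n] := ubnP #|~: H|; elim: n H => // n IH H ltHn hH.
case: (classic (maximal_hub a H)) => [mH|nmH]; first by exists H.
have [H' [hH' HH']] := not_maximal_hub hH nmH.
have [|M [mM H'M]] := IH H' _ hH'.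
  by apply: leq_trans (ltnSE ltHn); apply: proper_card; rewrite properC.
by exists M; split=> //; apply: subset_trans (proper_sub HH') H'M.
Qed.

Lemma maximal_hubs_partition (P : {set {set T}}) :
  (forall H, H \in P <-> maximal_hub a H) -> partition P [set: T].
Proof.
move=> PE; apply/and3P; split.
- apply/eqP/setP => x; rewrite inE; apply/bigcupP.
  have [M [mM xM]] := maximal_hub_exists (vertex_hub x).
  by exists M; [apply/PE | apply: (subsetP xM); rewrite inE].
- apply/trivIsetP => A B /PE mA /PE mB; exact: maximal_hubs_disjoint.
- by apply/negP => /PE [[[n0 _] _] _]; rewrite eqxx in n0.
Qed.

End Partition.
End Sinks.

Theorem claim2p5 (T : finType) (a : rel T) :
  1 < #|T| ->
  oriented a ->
  strong a ->
  (forall x : T, transitive_tournament a (outnb a x)) ->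
  (forall P : {set {set T}}, (forall H, H \in P <-> maximal_hub a H) ->
     partition P [set: T]) /\
  (forall H1 H2 : {set T}, maximal_hub a H1 -> maximal_hub a H2 -> H1 != H2 ->
     exactly_one3 (~ some_arc_between a H1 H2)
                  (arcs_into a H1 H2)
                  (arcs_into a H2 H1)).
Proof.
move=> T_nontrivial a_oriented a_strong outnb_tt; split.
  exact: maximal_hubs_partition.
exact: maximal_hubs_arcs.
Qed.
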